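(* Let $K\subseteq\mathbb{R}^n$ be a nonempty compact set, let $\mathbf{c}\in\mathbb{Z}^n$, $F:=F_K(\mathbf{c})$, and assume $h_K(\mathbf{c})\in\mathbb{Z}$. Let $\mathbf{a}_1,\dots,\mathbf{a}_k\in\mathbb{Z}^n$. Then there exist integers $n_1,\dots,n_k\ge0$ such that $$\mathrm{CG}\big(K,(\mathbf{a}_1+n_1\mathbf{c},\dots,\mathbf{a}_k+n_k\mathbf{c})\big)\cap H^=_K(\mathbf{c})=\mathrm{CG}\big(F,(\mathbf{a}_1,\dots,\mathbf{a}_k)\big).$$
   Context: $h_K(\mathbf{a})=\sup_{\mathbf{x}\in K}\mathbf{a}\mathbf{x}$, with $h_\emptyset\equiv-\infty$. For nonempty compact $K$: $H^=_K(\mathbf{a}):=\{\mathbf{x}:\mathbf{a}\mathbf{x}=h_K(\mathbf{a})\}$ and $F_K(\mathbf{a}):=K\cap H^=_K(\mathbf{a})$. For $\mathbf{a}\in\mathbb{Z}^n$, $\mathrm{CG}(K,\mathbf{a}):=K\cap\{\mathbf{x}:\mathbf{a}\mathbf{x}\le\lfloor h_K(\mathbf{a})\rfloor\}$; for a list, $\mathrm{CG}(K,(\mathbf{a}_1,\dots,\mathbf{a}_k)):=\mathrm{CG}(\mathrm{CG}(K,\mathbf{a}_1),(\mathbf{a}_2,\dots,\mathbf{a}_k))$ and $\mathrm{CG}(K,\emptyset)=K$. *)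

From HB Require Import structures.
From mathcomp Require Import all_boot all_order all_algebra.
From mathcomp Require Import all_classical all_reals all_analysis.
Set Implicit Arguments. Unset Strict Implicit. Unset Printing Implicit Defensive.
Import Order.TTheory GRing.Theory Num.Theory.
Import numFieldNormedType.Exports.
Local Open Scope classical_set_scope.
Local Open Scope ring_scope.

Definition idot (R : realType) (n : nat) (a : 'rV[int]_n) (x : 'rV[R]_n) : R :=
  \sum_(i < n) (a ord0 i)%:~R * x ord0 i.

(* support function h_K(a) = sup_{x in K} a x, in the extended reals
   (h_emptyset = -oo automatically) *)
Definition supp (R : realType) (n : nat) (K : set 'rV[R]_n) (a : 'rV[int]_n) : \bar R :=
  ereal_sup [set (idot a x)%:E | x in K].

Definition efloor (R : realType) (e : \bar R) : \bar R :=
  match e with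
  | EFin r => ((Num.floor r)%:~R)%:E
  | _ => e
  end.

Definition Hyp (R : realType) (n : nat) (K : set 'rV[R]_n) (a : 'rV[int]_n) : set 'rV[R]_n :=
  [set x | (idot a x)%:E = supp K a].

Definition Face (R : realType) (n : nat) (K : set 'rV[R]_n) (a : 'rV[int]_n) : set 'rV[R]_n :=
  K `&` Hyp K a.

Definition CG (R : realType) (n : nat) (K : set 'rV[R]_n) (a : 'rV[int]_n) : set 'rV[R]_n :=
  K `&` [set x | ((idot a x)%:E <= efloor (supp K a))%E].

Fixpoint CGs (R : realType) (n : nat) (K : set 'rV[R]_n) (s : seq 'rV[int]_n) : set 'rV[R]_n :=
  match s with
  | [::] => K
  | a :: s' => CGs (CG K a) s'
  end.

From HB Require Import structures.
From mathcomp Require Import all_boot all_order all_algebra.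
From mathcomp Require Import all_classical all_reals all_analysis.
From mathcomp Require Import ring lra.
Import Order.TTheory GRing.Theory Num.Theory.
Import numFieldNormedType.Exports.
Local Open Scope classical_set_scope.
Local Open Scope ring_scope.

(* Write z = h_K(c), so c x <= z on K and F = K ∩ {c x = z}.  The heart of the
   argument is the one-cut case ([one_cut_tilt]): if F is nonempty, a attains
   its maximum hF on F (compactness); pick u strictly between hF and
   floor(hF) + 1.  Points of K with a x >= u are not in F, so by compactness
   they satisfy c x <= z - d for some d > 0 ([face_gap]); hence for N large,
   (a + N c) x <= u + N z on all of K ([tilted_bound]).  Since the face point
   achieving hF gives the value hF + N z, the floor of h_K(a + N c) is
   floor(hF) + N z ([efloor_supp_window]), and on the hyperplane c x = z the
   two cuts a x <= floor(hF) and (a + N c) x <= floor(hF) + N z coincide.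
   Each CG-closure is again compact with c x <= z, so the general statement
   follows by induction on the list of cuts ([tilt_cuts]). *)

Section LinearForms.
Context {R : realType} {n : nat}.
Implicit Types (K A : set 'rV[R]_n) (a b c : 'rV[int]_n).

Lemma idot_continuous b : continuous (fun x : 'rV[R]_n => idot b x).
Proof.
rewrite /idot; elim: (index_enum _) => [|i s IH] x.
  under [fun _ => _]funext do rewrite big_nil; exact: cst_continuous.
under [fun _ => _]funext do rewrite big_cons.
apply: (continuousD (f := fun y : 'rV[R]_n => (b ord0 i)%:~R * y ord0 i));
  last exact: IH.
apply: cvgM; [exact: (@nbhs_filter _ x) | exact: cst_continuous |].
exact: coord_continuous.
Qed.

Lemma idotDZ a c (m : int) (x : 'rV[R]_n) :
  idot (a + m *: c) x = idot a x + m%:~R * idot c x.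
Proof.
rewrite /idot mulr_sumr -big_split; apply: eq_bigr => i _ /=.
by rewrite !mxE intrD intrM; ring.
Qed.

Lemma closed_idot_ge b (r : R) : closed [set x : 'rV[R]_n | r <= idot b x].
Proof. exact: (continuous_closedP _).1 (@idot_continuous b) _ (@closed_ge R r). Qed.

Lemma closed_idot_lee b (e : \bar R) :
  closed [set x : 'rV[R]_n | ((idot b x)%:E <= e)%E].
Proof.
case: e => [r||].
- under eq_set do rewrite lee_fin.
  exact: (continuous_closedP _).1 (@idot_continuous b) _ (@closed_le R r).
- rewrite (_ : [set x | _] = setT); first exact: closedT.
  by apply/seteqP; split => x //= _; exact: leey.
- rewrite (_ : [set x | _] = set0); first exact: closed0.
  by apply/seteqP; split => x //=; rewrite leeNy_eq.
Qed.

Lemma compact_CG {K} a : compact K -> compact (CG K a).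
Proof. by move=> cK; apply: compact_closedI cK (closed_idot_lee _ _). Qed.

Lemma idot_max {K} b : K !=set0 -> compact K ->
  exists2 x1, K x1 & forall x, K x -> idot b x <= idot b x1.
Proof.
move=> K0 cK.
have [x1 Kx1 x1max] := EVT_max_rV K0 cK (continuous_subspaceT (@idot_continuous b)).
by exists x1 => [|x Kx]; [rewrite -inE | apply: x1max; rewrite inE].
Qed.

Lemma efloor_supp_window {A b} {m : int} {t : R} {x1} :
  A x1 -> m%:~R <= idot b x1 -> (forall x, A x -> idot b x <= t) ->
  t < (m + 1)%:~R -> efloor (supp A b) = (m%:~R)%:E.
Proof.
move=> Ax1 mx1 At tm.
have supp_le : (supp A b <= t%:E)%E.
  by apply: ge_ereal_sup => _ [x Ax <-]; rewrite lee_fin; exact: At.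
have supp_ge : ((idot b x1)%:E <= supp A b)%E by apply: ereal_sup_ubound; exists x1.
move: supp_le supp_ge; case: (supp A b) => [s||]; rewrite ?leye_eq ?leeNy_eq //.
rewrite !lee_fin /= => st x1s; congr (_%:E); congr (_%:~R); apply: floor_def.
by apply/andP; split; lra.
Qed.

Section OneCut.
Variables (K : set 'rV[R]_n) (c : 'rV[int]_n) (z : R).
Hypotheses (cK : compact K) (c_le_z : forall x, K x -> idot c x <= z).

Lemma face_gap {a} {u : R} :
  (forall x, K x -> idot c x = z -> idot a x < u) ->
  exists2 d : R, 0 < d & forall x, K x -> u <= idot a x -> idot c x <= z - d.
Proof.
move=> face_lt.
have [Ku_ne|Ku_empty] := pselect ((K `&` [set x | u <= idot a x]) !=set0); last first.
  by exists 1 => // x Kx ux; exfalso; apply: Ku_empty; exists x.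
have cKu : compact (K `&` [set x | u <= idot a x]).
  exact: compact_closedI cK (closed_idot_ge _ _).
have [x3 [Kx3 /= ux3] x3max] := idot_max c Ku_ne cKu.
exists (z - idot c x3) => [|x Kx ux].
  rewrite subr_gt0 lt_neqAle c_le_z // andbT; apply/eqP => cx3.
  by have := face_lt x3 Kx3 cx3; lra.
by have := x3max x (conj Kx ux); lra.
Qed.

Lemma tilted_bound a (u : R) :
  (forall x, K x -> idot c x = z -> idot a x < u) ->
  exists N : nat, forall x, K x -> idot (a + N%:Z *: c) x <= u + N%:R * z.
Proof.
move=> face_lt.
have [d d0 gap] := face_gap face_lt.
have [K_ne|K_empty] := pselect (K !=set0); last first.
  by exists 0%N => x Kx; exfalso; apply: K_empty; exists x.
have [x2 Kx2 x2max] := idot_max a K_ne cK.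
pose N := (Num.truncn ((idot a x2 - u) / d)).+1.
have Nd : idot a x2 - u < N%:R * d by rewrite -ltr_pdivrMr //; exact: truncnS_gt.
exists N => x Kx; rewrite idotDZ /=.
have cx := c_le_z x Kx; have ax := x2max x Kx.
have N0 : 0 <= N%:R :> R by [].
case: (leP u (idot a x)) => ux.
- have := ler_wpM2l N0 (gap x Kx ux); rewrite mulrBr; nra.
- have := ler_wpM2l N0 cx; lra.
Qed.

Lemma one_cut_tilt a (z' : int) : z = z'%:~R ->
  exists N : nat, CG K (a + N%:Z *: c) `&` [set x | idot c x = z]
     = CG (K `&` [set x | idot c x = z]) a.
Proof.
move=> zE; set F := K `&` _.
have [F_ne|F_empty] := pselect (F !=set0); last first.
  by exists 0%N; apply/seteqP; split => x;
    [move=> [[Kx _] cx] | move=> [Fx _]]; exfalso; apply: F_empty; exists x.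
have cF : compact F.
  rewrite (_ : F = K `&` [set x | z <= idot c x]).
    exact: compact_closedI cK (closed_idot_ge _ _).
  apply/seteqP; split => x [Kx /= cx]; split => //=; first by rewrite cx.
  by apply/eqP; rewrite eq_le c_le_z.
have [x1 Fx1 x1max] := idot_max a F_ne cF.
set hF := idot a x1 in x1max *; set f := Num.floor hF; set u := (hF + (f + 1)%:~R) / 2.
have hF_lt : hF < (f + 1)%:~R := floorD1_gt hF.
have f_le : f%:~R <= hF := floor_le hF.
have [N tilted] : exists N : nat,
    forall x, K x -> idot (a + N%:Z *: c) x <= u + N%:R * z.
  by apply: tilted_bound => x Kx cx; have := x1max x (conj Kx cx); rewrite /u; lra.
have NzE : (N%:Z)%:~R * z = (N%:Z * z')%:~R :> R by rewrite zE intrM.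
have tiltedE : forall x, K x -> idot (a + N%:Z *: c) x <= u + (N%:Z * z')%:~R.
  by move=> x; rewrite -NzE; exact: tilted.
have floorK : efloor (supp K (a + N%:Z *: c)) = ((f + N%:Z * z')%:~R)%:E.
  apply: (efloor_supp_window Fx1.1 _ tiltedE).
    by case: Fx1 => _ cx1; rewrite idotDZ cx1 NzE intrD -/hF; lra.
  by rewrite !intrD /u; lra.
have floorF : efloor (supp F a) = (f%:~R)%:E.
  by apply: (efloor_supp_window Fx1 f_le x1max); lra.
exists N; rewrite /CG floorK floorF; apply/seteqP; split => x /=.
- move=> [[Kx bx] cx]; split; first by split.
  by move: bx; rewrite !lee_fin idotDZ cx NzE intrD; lra.
- move=> [[Kx cx] ax]; split => //; split => //.
  by move: ax; rewrite !lee_fin idotDZ cx NzE intrD; lra.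
Qed.

End OneCut.
Arguments one_cut_tilt {K c z}.

(* Iterating the one-cut case along a duplicate-free list of cut indices;
   the hypotheses are preserved because CG-closures shrink compact sets. *)
Lemma tilt_cuts {c : 'rV[int]_n} {z : int} {k} (A : 'I_k -> 'rV[int]_n)
    {s : seq 'I_k} : uniq s -> forall K, compact K ->
  (forall x, K x -> idot c x <= z%:~R) ->
  exists N : 'I_k -> nat,
   CGs K [seq A i + (N i)%:Z *: c | i <- s] `&` [set x | idot c x = z%:~R]
   = CGs (K `&` [set x | idot c x = z%:~R]) [seq A i | i <- s].
Proof.
elim: s => [|i s IH] /=; first by move=> _ K _ _; exists (fun=> 0%N).
case/andP => i_notin_s s_uniq K cK c_le_z.
have [Ni Ei] := one_cut_tilt cK c_le_z (A i) z erefl.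
have [N' E'] := IH s_uniq _ (compact_CG (A i + Ni%:Z *: c) cK)
  (fun x CGx => c_le_z x CGx.1).
exists (fun j => if j == i then Ni else N' j); rewrite /= eqxx -Ei -E'.
congr (CGs _ _ `&` _); apply/eq_in_map => j js.
by case: eqP => // ji; move: i_notin_s; rewrite -ji js.
Qed.

End LinearForms.

Theorem lemma4p1 (R : realType) (n : nat) (K : set 'rV[R]_n)
  (K_ne : K !=set0) (K_compact : compact K)
  (c : 'rV[int]_n) (hc_int : exists z : int, supp K c = (z%:~R)%:E)
  (k : nat) (A : 'I_k -> 'rV[int]_n) :
  exists N : 'I_k -> nat,
    CGs K [seq A i + (N i)%:Z *: c | i <- enum 'I_k] `&` Hyp K c
    = CGs (Face K c) [seq A i | i <- enum 'I_k].
Proof.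
case: hc_int => z hz.
have HypE : Hyp K c = [set x | idot c x = z%:~R].
  by rewrite /Hyp hz; apply/seteqP; split => x /=; [case | move=> ->].
have c_le_z : forall x, K x -> idot c x <= z%:~R.
  by move=> x Kx; rewrite -lee_fin -hz; apply: ereal_sup_ubound; exists x.
have [N EN] := tilt_cuts A (enum_uniq 'I_k) K K_compact c_le_z.
by exists N; rewrite /Face HypE.
Qed.
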